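(* Let $m,n\ge0$ and $a_1,\dots,a_{m+n}\in\Sigma$. Then there is an inclusion of presheaves \[\mathcal{L}\big(\mathrm{COSK}^\Sigma(\square[a_1,\dots,a_m]_{\leq 1}\times_\Sigma\square[a_{m+1},\dots,a_{m+n}]_{\leq 1})\big)\subset \mathrm{cosk}_1^{\widehat{\square},\Sigma}\big(\widehat{\square}[a_1,\dots,a_m]_{\leq 1}\times_\Sigma\widehat{\square}[a_{m+1},\dots,a_{m+n}]_{\leq 1}\big).\] Moreover, when $\Sigma\setminus\{\tau\}$ is non-empty, there exist two labelled cubes $\square[a_1,\dots,a_m]$, $\square[a_{m+1},\dots,a_{m+n}]$ for which this inclusion is strict.
   Context: Cubes and categories of cubes: $[0]=\{()\}$, $[n]=\{0,1\}^n$ with the product order; face maps $\delta_i^\alpha:[n-1]\to[n]$ insert $\alpha$ at position $i$; $\square$ is the category with objects $[n]$ generated by face maps; a map $[m]\to[n]$ is adjacency-preserving if strictly increasing and it sends pairs at Hamming distance $1$ to pairs at Hamming distance $1$; $\widehat\square$ is the category with objects $[n]$, $n\ge0$, and all adjacency-preserving maps. Presheaves on $\square$ (resp. $\widehat\square$) are precubical sets (resp. transverse symmetric precubical sets); $\square[p]=\square(-,[p])$, $\widehat\square[p]=\widehat\square(-,[p])$; $K_{\le1}$ is truncation to dimensions $\le1$. $\mathcal L$ is the left adjoint of the restriction functor from transverse symmetric precubical sets to precubical sets. Labels: $\Sigma$ is a non-empty set with a distinguished element $\tau$; $\Sigma\setminus\{\tau\}$ carries an involution $a\mapsto\bar a$.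 $!\Sigma$ is the precubical set with $(!\Sigma)_0=\{()\}$, $(!\Sigma)_n=\Sigma^n$, $\partial_i^0=\partial_i^1$ deleting the $i$-th letter. $\mathrm{sh}$ is the left adjoint of the inclusion into transverse symmetric precubical sets of the full subcategory of those $X$ in which two $p$-cubes ($p\ge2$) with the same boundary are equal. Labelled precubical sets are precubical sets over $!\Sigma$; labelled transverse symmetric precubical sets are transverse symmetric precubical sets over $\mathrm{sh}\mathcal L(!\Sigma)$; $\mathcal L$ sends $K\to!\Sigma$ to $\mathcal L(K)\to\mathcal L(!\Sigma)\to\mathrm{sh}\mathcal L(!\Sigma)$. $\square[a_1,\dots,a_n]$ is $\square[n]\to!\Sigma$ sending $\mathrm{id}_{[n]}$ to $(a_1,\dots,a_n)$; $\widehat\square[a_1,\dots,a_n]=\mathcal L(\square[a_1,\dots,a_n])$. A $1$-dimensional labelled (transverse symmetric or not) precubical set amounts to sets $K_0,K_1$, maps $\partial_1^0,\partial_1^1:K_1\to K_0$ and $\ell:K_1\to\Sigma$. $\mathrm{cosk}_1^{\widehat\square,\Sigma}$ (resp. $\mathrm{cosk}_1^{\square,\Sigma}$) is the right adjoint of truncation $K\mapsto K_{\le1}$ from labelled transverse symmetric precubical sets (resp. labelled precubical sets) to $1$-dimensional ones. Fibered product: for $1$-dimensional labelled $K,L$, $K\times_\Sigma L$ has $0$-cubes $K_0\times L_0$, $1$-cubes $(K_1\times L_0)\sqcup(K_0\times L_1)\sqcup\{(x,y)\in K_1\times L_1:\overline{\ell(x)}=\ell(y)\}$, faces componentwise on the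 $1$-cube components, labels $\ell(x,y)=\ell(x)$, $\ell(y)$, resp. $\tau$ in the three cases. Labelled directed coskeleton: for a $1$-dimensional labelled precubical set $K$ with $K_0$ identified with $[p]$ (here $[m]\times[n]=[m+n]$), and an $n'$-cube $x$ of $\mathrm{cosk}_1^{\square,\Sigma}(K)$, let $x_0:[n']\cong\square([0],[n'])\to[p]$ be the induced map on vertices; $x_0$ is non-twisted if $x_0=\psi\circ\phi$ with $\psi:[q]\to[p]$ in $\square$ and $\phi(\epsilon_1,\dots,\epsilon_{n'})=(\epsilon_{i_1},\dots,\epsilon_{i_q})$ where $\{1,\dots,n'\}\subset\{i_1,\dots,i_q\}$ and the first occurrence of $\epsilon_i$ precedes the first occurrence of $\epsilon_{i+1}$. $\mathrm{COSK}^\Sigma(K)$ is the sub-object of $\mathrm{cosk}_1^{\square,\Sigma}(K)$ with the same cubes of dimension $\le1$ and, in dimensions $\ge2$, exactly the cubes $x$ with $x_0$ non-twisted. *)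

From Stdlib Require Import Relations.Relation_Definitions Relations.Relation_Operators.
From mathcomp Require Import all_boot.
Set Implicit Arguments. Unset Strict Implicit. Unset Printing Implicit Defensive.

Section Defs.
Variable Sg : Type.
Variable tau : Sg.
Variable bar : Sg -> Sg.     (* the involution (only used on Sigma \ {tau}) *)

Definition vert (n : nat) := {ffun 'I_n -> bool}.

Definition vle n (u v : vert n) := [forall j, u j ==> v j].
Definition vlt n (u v : vert n) := vle u v && (u != v).
Definition ham n (u v : vert n) := #|[pred j | u j != v j]|.

Definition vface n (i : 'I_n.+1) (alpha : bool) (v : vert n) : vert n.+1 :=
  [ffun j => match unlift i j with Some k => v k | None => alpha end].

(* maps of the category box : composites of face maps *)
Inductive sqmap : forall q p : nat, (vert q -> vert p) -> Prop :=
| sq_id q : @sqmap q q (fun v => v)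
| sq_face q p (f : vert q -> vert p) (i : 'I_p.+1) (alpha : bool) :
    @sqmap q p f -> @sqmap q p.+1 (fun v => vface i alpha (f v)).

(* maps of the category hat-box : adjacency-preserving maps *)
Definition adj_pres p n (f : vert p -> vert n) : Prop :=
  (forall u v, vlt u v -> vlt (f u) (f v)) /\
  (forall u v, ham u v = 1 -> ham (f u) (f v) = 1).

(* the 1-cubes of [n] (= box([1],[n]) = hat-box([1],[n])):
   a vertex v together with a direction j with v_j = 0 *)
Definition cedge n := {x : vert n * 'I_n | x.1 x.2 == false}.
Definition esrc n (e : cedge n) : vert n := (sval e).1.
Definition etgt n (e : cedge n) : vert n :=
  [ffun k => (k == (sval e).2) || (sval e).1 k].
Definition edir n (e : cedge n) : 'I_n := (sval e).2.

(* 1-dimensional labelled (transverse symmetric) precubical sets       *)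
Record lab1 := Lab1 {
  V0 : Type; E1 : Type; d0 : E1 -> V0; d1 : E1 -> V0; lab : E1 -> Sg }.

Definition cube1s p (s : cedge p -> Sg) : lab1 :=
  @Lab1 (vert p) (cedge p) (@esrc p) (@etgt p) s.

Definition cube1 n (a : 'I_n -> Sg) : lab1 := cube1s (fun e => a (edir e)).

(* hat-box[a_1,...,a_n]_{<=1} = L(box[a_1,...,a_n])_{<=1}: the categories
   box and hat-box coincide on [0],[1], and L does not change dimensions
   <= 1 (L(!Sigma)_1 = Sigma = (sh L(!Sigma))_1), so this is the same
   1-dimensional labelled object. *)
Definition hcube1 n (a : 'I_n -> Sg) : lab1 := cube1 a.

Record lmap (A B : lab1) := LMap { m0 : V0 A -> V0 B; m1 : E1 A -> E1 B }.
Definition is_lmap A B (h : lmap A B) : Prop :=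
  (forall e, d0 (m1 h e) = m0 h (d0 e)) /\
  (forall e, d1 (m1 h e) = m0 h (d1 e)) /\
  (forall e, lab (m1 h e) = lab e).

Inductive fedge (K L : lab1) : Type :=
| FL : E1 K -> V0 L -> fedge K L
| FR : V0 K -> E1 L -> fedge K L
| FS (x : E1 K) (y : E1 L) : lab x <> tau /\ bar (lab x) = lab y -> fedge K L.

Definition fd0 K L (z : fedge K L) : V0 K * V0 L :=
  match z with FL x y => (d0 x, y) | FR x y => (x, d0 y)
             | FS x y _ => (d0 x, d0 y) end.
Definition fd1 K L (z : fedge K L) : V0 K * V0 L :=
  match z with FL x y => (d1 x, y) | FR x y => (x, d1 y)
             | FS x y _ => (d1 x, d1 y) end.
Definition flab K L (z : fedge K L) : Sg :=
  match z with FL x _ => lab x | FR _ y => lab y | FS _ _ _ => tau end.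

Definition fibprod (K L : lab1) : lab1 :=
  @Lab1 (V0 K * V0 L) (fedge K L) (@fd0 K L) (@fd1 K L) (@flab K L).

Definition vconcat m n (uv : vert m * vert n) : vert (m + n) :=
  [ffun k => match split k with inl i => uv.1 i | inr j => uv.2 j end].

(* an n-cube of cosk_1^{box,Sigma}(K): a label w in (!Sigma)_n = Sigma^n
   and a labelled map box[w]_{<=1} -> K *)
Record bcube (K : lab1) (n : nat) := BCube {
  bw : 'I_n -> Sg; bmap : lmap (cube1 bw) K }.
Definition is_bcube K n (x : bcube K n) : Prop := is_lmap (bmap x).

Definition first_occ q n' (idx : 'I_q -> 'I_n') (i : 'I_n') (k : 'I_q) :=
  idx k = i /\ forall k' : 'I_q, k' < k -> idx k' <> i.

Definition non_twisted n' P (x0 : vert n' -> vert P) : Prop :=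
  exists (q : nat) (psi : vert q -> vert P) (idx : 'I_q -> 'I_n'),
    @sqmap q P psi /\
    (forall i : 'I_n', exists k, idx k = i) /\
    (forall (i j : 'I_n') (ki kj : 'I_q), (i : nat).+1 = j ->
        first_occ idx i ki -> first_occ idx j kj -> ki < kj) /\
    (forall eps : vert n', x0 eps = psi [ffun k => eps (idx k)]).

(* COSK^Sigma(K) with K_0 identified with [P] via iota *)
Definition in_COSK K P (iota : V0 K -> vert P) n (x : bcube K n) : Prop :=
  is_bcube x /\ (n <= 1 \/ non_twisted (fun v => iota (m0 (bmap x) v))).

(* L(X)_p for a sub-presheaf X of cosk_1^{box,Sigma}(K): the coend      *)
(*   L(X)_p = (sum_n X_n x hat-box([p],[n])) / ~                        *)
(* with ~ generated by (d x, phi) ~ (x, delta o phi), delta a face map *)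
Record lelt (K : lab1) (p : nat) := LElt {
  ln : nat; lx : bcube K ln; lphi : vert p -> vert ln }.

Definition lvalid K P (iota : V0 K -> vert P) p (t : lelt K p) : Prop :=
  in_COSK iota (lx t) /\ adj_pres (lphi t).

Definition is_bface K n (i : 'I_n.+1) (alpha : bool)
    (x : bcube K n) (x' : bcube K n.+1) : Prop :=
  (forall j, bw x j = bw x' (lift i j)) /\
  (forall v, m0 (bmap x) v = m0 (bmap x') (vface i alpha v)) /\
  (forall (e : cedge n) (e' : cedge n.+1),
      esrc e' = vface i alpha (esrc e) -> etgt e' = vface i alpha (etgt e) ->
      m1 (bmap x) e = m1 (bmap x') e').

Definition lrel K P (iota : V0 K -> vert P) p (t t' : lelt K p) : Prop :=
  lvalid iota t /\ lvalid iota t' /\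
  exists n (x : bcube K n) (x' : bcube K n.+1) (phi : vert p -> vert n)
         (phi' : vert p -> vert n.+1) (i : 'I_n.+1) (alpha : bool),
    t = LElt x phi /\ t' = LElt x' phi' /\
    (forall u, phi' u = vface i alpha (phi u)) /\ is_bface i alpha x x'.

Definition lequiv K P (iota : V0 K -> vert P) p : relation (lelt K p) :=
  clos_refl_sym_trans (lelt K p) (@lrel K P iota p).

(* p-cubes of sh L(!Sigma) are determined by, and correspond to, the    *)
(* edge-labellings of [p] of the form e |-> w_{direction of phi(e)} for *)
(* some w in Sigma^n and phi in hat-box([p],[n])         *)
Definition realized p (s : cedge p -> Sg) : Prop :=
  exists n (w : 'I_n -> Sg) (phi : vert p -> vert n), adj_pres phi /\
    forall (e : cedge p) (e' : cedge n),
      esrc e' = phi (esrc e) -> etgt e' = phi (etgt e) -> s e = w (edir e').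

(* a p-cube of cosk_1^{hat-box,Sigma}(K): a p-cube sigma of sh L(!Sigma)
   (given by its edge labels s) and a labelled map hat-box[sigma]_{<=1} -> K *)
Record hcube (K : lab1) (p : nat) := HCube {
  hs : cedge p -> Sg; hmap : lmap (cube1s hs) K }.
Definition is_hcube K p (c : hcube K p) : Prop := realized (hs c) /\ is_lmap (hmap c).

(* the canonical map L(COSK K)_p -> cosk_1^{hat-box,Sigma}(K)_p :
   [x, phi] |-> ([w, phi], x o phi)                                    *)
Definition lmaps K p (t : lelt K p) (c : hcube K p) : Prop :=
  (forall u, m0 (hmap c) u = m0 (bmap (lx t)) (lphi t u)) /\
  (forall (e : cedge p) (e' : cedge (ln t)),
      esrc e' = lphi t (esrc e) -> etgt e' = lphi t (etgt e) ->
      m1 (hmap c) e = m1 (bmap (lx t)) e' /\ hs c e = bw (lx t) (edir e')).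

End Defs.

From Stdlib Require Import Relations.Relation_Definitions Relations.Relation_Operators.
From mathcomp Require Import all_boot zify.
From Stdlib Require Import FunctionalExtensionality ProofIrrelevance.
Set Implicit Arguments. Unset Strict Implicit. Unset Printing Implicit Defensive.

(* Compose the vertex map of a cube x of COSK(T) with the identification T_0 = [m + n]:
   for non-twisted x this map f : [d] -> [m + n] has only constant and projection
   coordinates, every input coordinate is projected somewhere, and the first
   projections onto j and j + 1 occur in this order; conversely such maps are
   non-twisted, so faces of cubes of COSK(T) stay in COSK(T).  Pushing constant
   coordinates of phi into faces of x, every class [x, phi] of L(COSK T) has a
   representative with phi non-degenerate.  For such a representative the composite
   f o phi already determines d, phi and f: its coordinates which are non-constant
   and differ from all earlier ones are exactly the first projections onto the
   coordinates of phi, in increasing order (adjacency preservation of phi keeps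
   distinct coordinates of phi distinct).  As cubes of T are determined by their
   vertices, the canonical map to cosk_1 is injective.

   For strictness take the labels (a, bar a, bar a) and the square u |-> (u0 || u1, u)
   of the coskeleton, whose underlying map [2] -> [2], u |-> (u0 || u1, u0 && u1),
   is adjacency-preserving but not a map of cubes.  In a factorization through
   L(COSK T), the coordinates u0 || u1 and u0 would both be projections onto the
   unique coordinate of phi flipped along the edge from 0 to (1, 0), hence equal. *)

Definition zero_vert d : vert d := [ffun _ => false].
Definition unit_vert d (j : 'I_d) : vert d := [ffun k => k == j].

Lemma vert0_eq (u v : vert 0) : u = v.
Proof. by apply/ffunP => -[]. Qed.

Lemma vle_refl n (u : vert n) : vle u u.
Proof. by apply/forallP => k; exact: implybb. Qed.

Lemma ham1P n (u v : vert n) :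
  ham u v = 1 <-> exists j, u j != v j /\ forall k, u k != v k -> k = j.
Proof.
split.
  move=> /eqP /card1P [j Hj]; exists j; split.
    by have := Hj j; rewrite !inE eqxx => ->.
  by move=> k Hk; have := Hj k; rewrite !inE Hk => /esym /eqP.
move=> [j [Hj Hk]]; apply/eqP/card1P; exists j => k; rewrite !inE.
case: (boolP (u k != v k)) => h; first by rewrite (Hk _ h) eqxx.
by apply/esym/eqP => e; move: h; rewrite e Hj.
Qed.

Section Faces.
Variables (n : nat) (i : 'I_n.+1) (alpha : bool).

Lemma vface_lift (v : vert n) k : vface i alpha v (lift i k) = v k.
Proof. by rewrite /vface ffunE liftK. Qed.

Lemma vface_i (v : vert n) : vface i alpha v i = alpha.
Proof. by rewrite /vface ffunE unlift_none. Qed.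

Lemma vface_inj : injective (vface i alpha).
Proof. by move=> u v e; apply/ffunP=> k; rewrite -(vface_lift u) e vface_lift. Qed.

Lemma ham_vface (u v : vert n) : ham (vface i alpha u) (vface i alpha v) = 1 <-> ham u v = 1.
Proof.
rewrite !ham1P; split => [[j [Hj Hk]]|[j [Hj Hk]]].
  case: (unliftP i j) Hj Hk => [j' ->|->]; last by rewrite !vface_i eqxx.
  rewrite !vface_lift => Hj Hk; exists j'; split => // k Hk'.
  by apply: (@lift_inj _ i); apply: Hk; rewrite !vface_lift.
exists (lift i j); rewrite !vface_lift; split => // k.
case: (unliftP i k) => [k' ->|->]; last by rewrite !vface_i eqxx.
by rewrite !vface_lift => /Hk ->.
Qed.

Lemma vlt_vface (u v : vert n) : vlt (vface i alpha u) (vface i alpha v) = vlt u v.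
Proof.
rewrite /vlt (inj_eq vface_inj); congr (_ && _).
apply/forallP/forallP => H k; first by have := H (lift i k); rewrite !vface_lift.
by case: (unliftP i k) => [k' ->|->]; rewrite ?vface_lift ?vface_i ?implybb.
Qed.

End Faces.

Lemma adj_pres_face p d (i : 'I_d.+1) alpha (phi : vert p -> vert d) :
  adj_pres (fun u => vface i alpha (phi u)) -> adj_pres phi.
Proof.
move=> [Hlt Hham]; split => u v; first by move=> /Hlt; rewrite vlt_vface.
by move=> /Hham /ham_vface.
Qed.

Section Edges.
Variable n : nat.
Implicit Types e : cedge n.

Lemma etgt_src e k : etgt e k = (k == edir e) || esrc e k.
Proof. by rewrite /etgt ffunE. Qed.

Lemma esrc_dir e : esrc e (edir e) = false.
Proof. by case: e => [[u j] H]; apply/eqP. Qed.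

Lemma etgt_dir e : etgt e (edir e) = true.
Proof. by rewrite etgt_src eqxx. Qed.

Lemma cedge_eq e e' : esrc e = esrc e' -> etgt e = etgt e' -> e = e'.
Proof.
case: e => [[u j] Hj]; case: e' => [[u' j'] Hj'].
rewrite /esrc /etgt /= => Eu; subst u'.
have Hj0 : u j = false := elimT eqP Hj.
move=> /ffunP /(_ j); rewrite !ffunE eqxx Hj0 orbF /= orbF => /esym /eqP E.
by subst j'; congr (exist _ _ _); apply: eq_irrelevance.
Qed.

Lemma cedge_vle e : vle (esrc e) (etgt e).
Proof. by apply/forallP => k; rewrite etgt_src; apply/implyP => ->; rewrite orbT. Qed.

Lemma cedge_neq e : esrc e != etgt e.
Proof. by apply/eqP => /ffunP /(_ (edir e)); rewrite esrc_dir etgt_dir. Qed.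

Lemma cedge_vlt e : vlt (esrc e) (etgt e).
Proof. by rewrite /vlt cedge_vle cedge_neq. Qed.

Lemma cedge_ham e : ham (esrc e) (etgt e) = 1.
Proof.
apply/ham1P; exists (edir e); rewrite esrc_dir etgt_dir; split => // k.
by rewrite etgt_src; case: (k =P edir e) => [->|_] //=; rewrite eqxx.
Qed.

Lemma cedge_exists (u v : vert n) : vlt u v -> ham u v = 1 ->
  exists e, esrc e = u /\ etgt e = v.
Proof.
move=> /andP [/forallP Hle Hne] /ham1P [j [Hj Hk]].
have uj : u j = false by move: (Hle j) Hj; case: (u j); case: (v j).
exists (exist _ (u, j) (introT eqP uj)); split => //.
apply/ffunP => k; rewrite ffunE /=.
case: (eqVneq k j) => [->|kj] /=; first by move: Hj; rewrite uj; case: (v j).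
by case: (eqVneq (u k) (v k)) => // /Hk E; rewrite E eqxx in kj.
Qed.

End Edges.

Lemma adj_pres_cedge p d (phi : vert p -> vert d) (e : cedge p) : adj_pres phi ->
  exists e' : cedge d, esrc e' = phi (esrc e) /\ etgt e' = phi (etgt e).
Proof. by move=> [Hlt Hham]; apply: cedge_exists; [apply/Hlt/cedge_vlt | apply/Hham/cedge_ham]. Qed.

Definition eface n (i : 'I_n.+1) (alpha : bool) (e : cedge n) : cedge n.+1 :=
  exist _ (vface i alpha (esrc e), lift i (edir e))
    (introT eqP (etrans (vface_lift i alpha (esrc e) (edir e)) (esrc_dir e))).

Lemma eface_tgt n (i : 'I_n.+1) alpha e : etgt (eface i alpha e) = vface i alpha (etgt e).
Proof.
apply/ffunP => k; rewrite etgt_src /=.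
case: (unliftP i k) => [k' ->|->].
  by rewrite !vface_lift etgt_src (inj_eq (@lift_inj _ i)).
by rewrite !vface_i (negbTE (neq_lift _ _)).
Qed.

(** * Maps of the box category *)

Definition incr_below q (g : nat -> nat) := forall k k', k < k' -> k' < q -> g k < g k'.

(* The maps of [square] are exactly those copying the letters of [w] to strictly
   increasing positions [g] and filling the other positions with constants [c]. *)
Definition box_pattern q P (g : nat -> nat) (c : nat -> bool) (psi : vert q -> vert P) :=
  [/\ incr_below q g, forall k, k < q -> g k < P &
      forall w (r : 'I_P), (forall k : 'I_q, g k = r -> psi w r = w k) /\
                          ((forall k : 'I_q, g k <> r) -> psi w r = c r)].

Section IncrBelow.
Variables (q : nat) (g : nat -> nat).
Hypothesis Hg : incr_below q g.

Lemma incr_below_le k k' : k <= k' -> k' < q -> g k <= g k'.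
Proof. by rewrite leq_eqVlt => /orP [/eqP -> //|lt] lt'; apply/ltnW/Hg. Qed.

Lemma incr_below_geq k : k < q -> k <= g k.
Proof. by elim: k => [//|k IH] lt; have := Hg (ltnSn k) lt; have := IH (ltnW lt); lia. Qed.

Lemma incr_below_gap k j : k <= j -> j < q -> g k + (j - k) <= g j.
Proof.
elim: j => [|j IH] kj jq; first by (have -> : k = 0 by lia); rewrite subnn addn0.
case: (eqVneq k j.+1) => [->|ne]; first by rewrite subnn addn0.
have := IH (ltac:(lia) : k <= j) (ltnW jq); have := Hg (ltnSn j) jq; lia.
Qed.

Lemma incr_below_id : (forall k, k < q -> g k < q) -> forall k, k < q -> g k = k.
Proof.
move=> B k kq; have := incr_below_geq kq.
have := incr_below_gap (ltac:(lia) : k <= q.-1) (ltac:(lia) : q.-1 < q).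
have := B _ (ltac:(lia) : q.-1 < q); lia.
Qed.

Lemma incr_below_miss P : q < P -> exists2 r0, r0 < P & forall k, k < q -> g k <> r0.
Proof.
move=> qP; case: (boolP [exists k : 'I_q, g k != k]) => [ex|]; last first.
  move=> /existsPn all; exists q => // k kq.
  by have := all (Ordinal kq); rewrite negbK => /eqP /= ->; lia.
have ex' : exists k, (k < q) && (g k != k).
  by case/existsP: ex => k hk; exists k; rewrite ltn_ord.
case: (ex_minnP ex') => k0 /andP [k0q gk0] min; exists k0; first by lia.
move=> k kq; case: (ltnP k k0) => kk0.
  have /eqP -> : g k == k.
    by apply/negPn/negP => hn; have := min k; rewrite kq hn /= => /(_ isT); lia.
  by lia.
by have := incr_below_geq k0q; have := incr_below_le kk0 kq; move: gk0 => /eqP; lia.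
Qed.

End IncrBelow.

Lemma sqmap_pattern q P psi : @sqmap q P psi -> exists g c, box_pattern g c psi.
Proof.
elim => {q P psi} [q | q p f i a Hf [g [c [H1 H2 H3]]]].
  exists id, (fun _ => false); split; first by move=> k k' ? ?.
    by [].
  move=> w r; split; last by move=> /(_ r).
  by move=> k /= E; congr (w _); apply: val_inj.
exists (fun k => bump i (g k)), (fun r : nat => if r == i :> nat then a else c (unbump i r)).
split.
- move=> k k' kk' k'q; have := H1 k k' kk' k'q.
  by rewrite /bump; case: leqP; case: leqP; lia.
- by move=> k kq; have := H2 k kq; rewrite /bump; case: leqP; lia.
move=> w r; rewrite /vface ffunE; case: (unliftP i r) => [r' ->|->].
  have [A1 A2] := H3 w r'; split.
    by move=> k /= E; apply: A1; have := f_equal (unbump i) E; rewrite !bumpK.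
  move=> Hn; rewrite /= (negbTE (_ : bump i r' != i)) ?bumpK; last by rewrite eq_sym neq_bump.
  by apply: A2 => k E; apply: (Hn k) => /=; rewrite E.
split; last by rewrite eqxx.
by move=> k /= E; move: (neq_bump i (g k)); rewrite E eqxx.
Qed.

Lemma pattern_sqmap q P g c psi : @box_pattern q P g c psi -> sqmap psi.
Proof.
move=> Hpat; have [d EP] : exists d, P = q + d.
  exists (P - q); case: Hpat => H1 H2 _; case: q {psi} g H1 H2 => [|q] g H1 H2; first lia.
  by have := incr_below_geq H1 (ltnSn q); have := H2 q (ltnSn q); lia.
elim: d q P g c psi EP Hpat => [|d IH] q P g c psi EP [H1 H2 H3].
  rewrite addn0 in EP; subst P.
  have -> : psi = fun w => w.
    apply: functional_extensionality => w; apply/ffunP => r.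
    by have [A1 _] := H3 w r; exact: A1 r (incr_below_id H1 H2 (ltn_ord r)).
  exact: sq_id.
case: P psi EP H2 H3 => [|P'] psi EP H2 H3; first by lia.
have [r0 r0P r0n] := incr_below_miss H1 (ltac:(lia) : q < P'.+1).
pose i := Ordinal r0P.
(* [r0] is a position not hit by [g]: split off the face inserting [c r0] there *)
have -> : psi = fun w => vface i (c r0) [ffun r' => psi w (lift i r')].
  apply: functional_extensionality => w; apply/ffunP => r.
  case: (unliftP i r) => [r' ->|->]; first by rewrite vface_lift ffunE.
  by rewrite vface_i; apply: (proj2 (H3 w i)) => k /= E; exact: (r0n k (ltn_ord k) E).
apply/sq_face/(IH q P' (fun k => unbump r0 (g k)) (fun r => c (bump r0 r))); first by lia.
split.
- move=> k k' kk' k'q; have := H1 k k' kk' k'q.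
  have := r0n k (ltn_trans kk' k'q); have := r0n k' k'q.
  by rewrite /unbump; case: ltnP; case: ltnP; lia.
- by move=> k kq; have := H2 k kq; have := r0n k kq; move: (r0P); rewrite /unbump; case: ltnP; lia.
move=> w r'; rewrite ffunE; have [A1 A2] := H3 w (lift i r'); split.
  move=> k E; apply: A1 => /=.
  by rewrite -E unbumpK // inE; apply/eqP; exact: r0n k (ltn_ord k).
by move=> Hn; apply: A2 => k /= E; apply: (Hn k); rewrite E bumpK.
Qed.

Lemma box_pattern_pick q P (g : nat -> nat) (c : nat -> bool) :
  incr_below q g -> (forall k, k < q -> g k < P) ->
  box_pattern g c (fun w : vert q =>
    [ffun r : 'I_P => if [pick k : 'I_q | g k == r] is Some k then w k else c r]).
Proof.
move=> H1 H2; have ginj (k k' : 'I_q) : g k = g k' -> k = k'.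
  move=> E; apply: val_inj => /=; case: (ltngtP k k') => // lt.
    by have := H1 k k' lt (ltn_ord k'); lia.
  by have := H1 k' k lt (ltn_ord k); lia.
split => // w r; rewrite ffunE; split.
  by move=> k E; case: pickP => [k' /eqP E'|/(_ k)]; [rewrite (ginj k' k) // E' | rewrite E eqxx].
by move=> N; case: pickP => [k' /eqP E'|//]; case: (N k').
Qed.

(** * Non-twisted maps *)

Section Coords.
Variables (d P : nat).
Implicit Types (f : vert d -> vert P) (r : 'I_P) (j : 'I_d).

Definition coord_proj f r j := forall e, f e r = e j.
Definition coord_const f r := exists b, forall e, f e r = b.

Definition nontwisted_coords f :=
  [/\ forall r, coord_const f r \/ exists j, coord_proj f r j,
      forall j, exists r, coord_proj f r j &
      forall j j' r', j.+1 = j' -> coord_proj f r' j' ->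
        exists r, r < r' /\ coord_proj f r j].

Lemma coord_projP f r j : reflect (coord_proj f r j) [forall e, f e r == e j].
Proof. by apply: (iffP forallP) => H e; apply/eqP/H. Qed.

Lemma coord_proj_inj f r j j' : coord_proj f r j -> coord_proj f r j' -> j = j'.
Proof. by move=> H H'; have := H (unit_vert j); rewrite H' !ffunE eqxx => /eqP. Qed.

Lemma coord_proj_nonconst f r j : coord_proj f r j -> ~ coord_const f r.
Proof.
move=> H [b Hb]; have := H (unit_vert j); have := H (zero_vert d).
by rewrite !Hb !ffunE eqxx => ->.
Qed.

Lemma nontwisted_coords_lt f : nontwisted_coords f ->
  forall j j' r', j < j' -> coord_proj f r' j' -> exists r, r < r' /\ coord_proj f r j.
Proof.
move=> [_ _ Hnext].
suff: forall n j j' r', j' = j + n.+1 :> nat -> coord_proj f r' j' ->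
      exists r, r < r' /\ coord_proj f r j.
  by move=> H j j' r' lt; apply: (H (j' - j).-1); lia.
elim=> [|n IH] j j' r' E Hp; first by apply: (Hnext j j' r' _ Hp); lia.
have jm_lt : j + n.+1 < d by have := ltn_ord j'; lia.
have [rm [rm_lt Hm]] := Hnext (Ordinal jm_lt) j' r' (ltac:(rewrite E /=; lia)) Hp.
have [r [r_lt Hr]] := IH j (Ordinal jm_lt) rm erefl Hm.
by exists r; split => //; lia.
Qed.

Lemma proj_coords_enum f : exists q (g : nat -> nat),
  [/\ incr_below q g, forall k, k < q -> g k < P &
      forall r, (exists j, coord_proj f r j) <-> exists k : 'I_q, g k = r].
Proof.
pose isproj (n : nat) := [exists r : 'I_P, (val r == n) && [exists j, [forall e, f e r == e j]]].
pose R := [seq n <- iota 0 P | isproj n].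
have Rsort : sorted ltn R by apply: sorted_filter; [exact: ltn_trans | exact: iota_ltn_sorted].
exists (size R), (nth 0 R); split.
- by move=> k k' kk' k'q; apply: (sorted_ltn_nth ltn_trans) => //; rewrite inE; lia.
- by move=> k /(mem_nth 0); rewrite mem_filter mem_iota => /andP [_ /andP [_]].
move=> r; split => [[j Hj]|[k Ek]].
  have rR : val r \in R.
    rewrite mem_filter mem_iota /= ltn_ord andbT; apply/existsP; exists r.
    by rewrite eqxx; apply/existsP; exists j; exact/coord_projP.
  by exists (Ordinal (ltac:(by rewrite index_mem) : index (val r) R < size R)); rewrite /= nth_index.
have := mem_nth 0 (ltn_ord k); rewrite mem_filter => /andP [/existsP [r' /andP [/eqP E]]].
by move=> /existsP [j /coord_projP Hj]; exists j; have -> : r = r' by apply: val_inj; rewrite /= E Ek.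
Qed.

End Coords.

Lemma first_occ_exists q d (idx : 'I_q -> 'I_d) (j : 'I_d) :
  (exists k, idx k = j) -> exists k, first_occ idx j k.
Proof.
move=> [k0 Hk0].
have ex : exists n, [exists k : 'I_q, (val k == n) && (idx k == j)].
  by exists (val k0); apply/existsP; exists k0; rewrite eqxx Hk0 eqxx.
case: (ex_minnP ex) => n /existsP [k /andP [/eqP Ek /eqP Ij]] min.
exists k; split => // k' lt E.
have : n <= k' by apply: min; apply/existsP; exists k'; rewrite eqxx E eqxx.
by move: Ek => /= <-; lia.
Qed.

Section NonTwisted.
Variables (d P : nat) (f : vert d -> vert P).

Lemma non_twisted_coords : non_twisted f -> nontwisted_coords f.
Proof.
move=> [q [psi [idx [Hsq [Hsurj [Hord Hf]]]]]].
have [g [c [H1 H2 H3]]] := sqmap_pattern Hsq.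
pose pos (k : 'I_q) : 'I_P := Ordinal (H2 k (ltn_ord k)).
have proj_pos k : coord_proj f (pos k) (idx k).
  by move=> e; rewrite Hf (proj1 (H3 _ (pos k)) k) // ffunE.
have pos_or_const r : (exists k, pos k = r) \/ coord_const f r.
  case: (boolP [exists k : 'I_q, g k == r]) => [/existsP [k /eqP E]|/existsPn N].
    by left; exists k; apply: val_inj.
  right; exists (c r) => e; rewrite Hf; apply: (proj2 (H3 _ r)) => k E.
  by have := N k; rewrite E eqxx.
split.
- move=> r; case: (pos_or_const r) => [[k <-]|]; last by left.
  by right; exists (idx k); exact: proj_pos.
- by move=> j; have [k <-] := Hsurj j; exists (pos k).
move=> j j' r' Ejj Hp.
case: (pos_or_const r') => [[k' Ek']|Hc]; last by case: (coord_proj_nonconst Hp Hc).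
have Ik' : idx k' = j' by apply: (coord_proj_inj (proj_pos k')); rewrite Ek'.
have [[ki Fi] [kj Fj]] := (first_occ_exists (Hsurj j), first_occ_exists (Hsurj j')).
have kjk' : kj <= k'.
  by rewrite leqNgt; apply/negP => lt; case: Fj => _ /(_ k' lt); rewrite Ik'.
exists (pos ki); split; last by case: Fi => <- _; exact: proj_pos.
rewrite -Ek' /=; have := H1 ki kj (Hord j j' ki kj Ejj Fi Fj) (ltn_ord kj).
by have := incr_below_le H1 kjk' (ltn_ord k'); lia.
Qed.

Lemma coords_non_twisted : nontwisted_coords f -> non_twisted f.
Proof.
move=> [Hcoord Hsurj Hnext].
have [q [g [H1 H2 Hg]]] := proj_coords_enum f.
have ex_idx (k : 'I_q) : exists j, forall r : 'I_P, val r = g k -> coord_proj f r j.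
  have [j Hj] := proj2 (Hg (Ordinal (H2 k (ltn_ord k)))) (ex_intro _ k erefl).
  by exists j => r E; have -> : r = Ordinal (H2 k (ltn_ord k)) by apply: val_inj.
have [idx Hidx] := fin_all_exists ex_idx.
pose c (n : nat) := if insub n is Some r then f (zero_vert d) r else false.
pose psi (w : vert q) : vert P :=
  [ffun r : 'I_P => if [pick k : 'I_q | g k == r] is Some k then w k else c r].
have Hpat : box_pattern g c psi by apply: box_pattern_pick.
have idx_proj r j : coord_proj f r j -> exists2 k : 'I_q, g k = r & idx k = j.
  move=> Hj; have [k Ek] := (proj1 (Hg r)) (ex_intro _ j Hj).
  by exists k => //; apply: (coord_proj_inj (Hidx k r (esym Ek)) Hj).
exists q, psi, idx; split; first exact: pattern_sqmap Hpat.
split; [|split].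
- by move=> j; have [r /idx_proj [k _ <-]] := Hsurj j; exists k.
- move=> i j ki kj Eij [Ii Fi] [Ij Fj].
  have Hkj := Hidx kj (Ordinal (H2 kj (ltn_ord kj))) erefl; rewrite Ij in Hkj.
  have [r [rlt /idx_proj [k Ek Ik]]] := Hnext i j _ Eij Hkj.
  have kkj : k < kj.
    rewrite ltnNge; apply/negP => le.
    by have := incr_below_le H1 le (ltn_ord k); move: rlt; rewrite /= -Ek; lia.
  rewrite ltnNge; apply/negP => le.
  case: (ltngtP k ki) => [lt|lt|E]; [by case: (Fi k lt) | lia | lia].
move=> eps; apply/ffunP => r; case: Hpat => _ _ /(_ [ffun k => eps (idx k)] r) [Hin Hout].
case: (Hcoord r) => [[b Hb]|[j Hj]].
  rewrite Hout /c ?valK ?Hb // => k Ek.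
  by case: (coord_proj_nonconst (Hidx k r (esym Ek)) (ex_intro _ b Hb)).
by have [k Ek Ik] := idx_proj r j Hj; rewrite (Hin k Ek) ffunE Ik (Hj eps).
Qed.

Lemma non_twistedP : non_twisted f <-> nontwisted_coords f.
Proof. by split; [exact: non_twisted_coords | exact: coords_non_twisted]. Qed.

End NonTwisted.

Section FaceCoords.
Variables (d P : nat) (f : vert d.+1 -> vert P) (i : 'I_d.+1) (alpha : bool).
Hypothesis Hf : nontwisted_coords f.

Lemma coord_proj_face r j : coord_proj (fun v => f (vface i alpha v)) r j -> coord_proj f r (lift i j).
Proof.
have [Hcoord _ _] := Hf; move=> Hp; case: (Hcoord r) => [[b Hb]|[J HJ]].
  by case: (coord_proj_nonconst Hp); exists b => e; rewrite Hb.
case: (unliftP i J) HJ => [J' ->|->] HJ.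
  by have -> // : j = J'; apply: (coord_proj_inj Hp) => e; rewrite HJ vface_lift.
by case: (coord_proj_nonconst Hp); exists alpha => e; rewrite HJ vface_i.
Qed.

Lemma nontwisted_coords_face : nontwisted_coords (fun v => f (vface i alpha v)).
Proof.
have [Hcoord Hsurj _] := Hf; split.
- move=> r; case: (Hcoord r) => [[b Hb]|[J HJ]]; first by left; exists b.
  case: (unliftP i J) HJ => [J' ->|->] HJ; first by right; exists J' => e; rewrite HJ vface_lift.
  by left; exists alpha => e; rewrite HJ vface_i.
- by move=> j; have [r Hr] := Hsurj (lift i j); exists r => e; rewrite Hr vface_lift.
move=> j j' r' E /coord_proj_face Hp.
have lt : lift i j < lift i j' by rewrite /= /bump -E; case: leqP; case: leqP; lia.
by have [r [rlt Hr]] := nontwisted_coords_lt Hf lt Hp; exists r; split => // e; rewrite Hr vface_lift.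
Qed.

End FaceCoords.

(** * Cubes of the fibered product *)

Lemma vert0_nontwisted_coords P (f : vert 0 -> vert P) : nontwisted_coords f.
Proof.
split => [r||[]//]; last by case.
by left; exists (f (zero_vert 0) r) => e; rewrite (vert0_eq e (zero_vert 0)).
Qed.

Lemma vert1_nontwisted_coords P (f : vert 1 -> vert P) :
  vle (f (zero_vert 1)) (f (unit_vert ord0)) -> f (zero_vert 1) != f (unit_vert ord0) ->
  nontwisted_coords f.
Proof.
set f0 := f (zero_vert 1); set f1 := f (unit_vert ord0) => /forallP Hle Hneq.
have Ef e : f e = if e ord0 then f1 else f0.
  rewrite /f0 /f1; case E: (e ord0); congr f; apply/ffunP => k;
  by rewrite (ord1 k) !ffunE E ?eqxx.
have Hcoord r : coord_const f r \/ coord_proj f r ord0.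
  case: (eqVneq (f0 r) (f1 r)) => [E|N].
    by left; exists (f0 r) => e; rewrite Ef; case: (e ord0); rewrite ?E.
  by right => e; rewrite Ef; move: (Hle r) N; case: (e ord0); case: (f0 r); case: (f1 r).
split => [r|j|j j' r']; last by rewrite (ord1 j) (ord1 j').
  by case: (Hcoord r) => H; [left | right; exists ord0].
rewrite (ord1 j); case: (boolP [exists r, f0 r != f1 r]) => [/existsP [r Hr]|/existsPn N].
  by exists r; case: (Hcoord r) => // -[b Hb]; move: Hr; rewrite /f0 /f1 !Hb eqxx.
by case/eqP: Hneq; apply/ffunP => r; apply/eqP; rewrite -[_ == _]negbK N.
Qed.

Section Concat.
Variables m n : nat.

Lemma vconcat_l (uv : vert m * vert n) i : vconcat uv (lshift n i) = uv.1 i.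
Proof. by rewrite /vconcat ffunE -[lshift n i]/(unsplit (inl i)) unsplitK. Qed.

Lemma vconcat_r (uv : vert m * vert n) j : vconcat uv (rshift m j) = uv.2 j.
Proof. by rewrite /vconcat ffunE -[rshift m j]/(unsplit (inr j)) unsplitK. Qed.

Lemma vconcat_inj : injective (@vconcat m n).
Proof.
move=> [u1 u2] [v1 v2] E; congr pair; apply/ffunP => k.
  by have := congr1 (fun w : vert (m + n) => w (lshift n k)) E; rewrite !vconcat_l.
by have := congr1 (fun w : vert (m + n) => w (rshift m k)) E; rewrite !vconcat_r.
Qed.

Lemma vconcat_vle (u v : vert m * vert n) :
  vle u.1 v.1 -> vle u.2 v.2 -> vle (vconcat u) (vconcat v).
Proof.
move=> /forallP H1 /forallP H2; apply/forallP => k.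
by rewrite /vconcat !ffunE; case: (split k) => [i|j]; [exact: H1 | exact: H2].
Qed.

End Concat.

Section FibCubes.
Variables (Sg : Type) (tau : Sg) (bar : Sg -> Sg) (m n : nat)
  (a1 : 'I_m -> Sg) (a2 : 'I_n -> Sg).
Local Notation T := (fibprod tau bar (cube1 a1) (cube1 a2)).
Local Notation iota := (@vconcat m n : V0 T -> vert (m + n)).

Lemma fibprod_edge_eq (z z' : E1 T) : d0 z = d0 z' -> d1 z = d1 z' -> z = z'.
Proof.
case: z => [x y|x y|x y p]; case: z' => [x' y'|x' y'|x' y' p'] /= [E1 E2] [E3 E4];
  try by [move: (cedge_neq x); rewrite ?E1 ?E3 -?E1 -?E3 eqxx
         | move: (cedge_neq x'); rewrite -?E1 -?E3 eqxx
         | move: (cedge_neq y); rewrite ?E2 ?E4 eqxx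
         | move: (cedge_neq y'); rewrite -?E2 -?E4 eqxx].
- by subst; congr FL; apply: cedge_eq.
- by subst; congr FR; apply: cedge_eq.
have ex : x = x' by apply: cedge_eq.
have ey : y = y' by apply: cedge_eq.
by subst x' y'; congr FS; apply: proof_irrelevance.
Qed.

Lemma fibprod_edge_vle (z : E1 T) : vle (iota (d0 z)) (iota (d1 z)).
Proof. by case: z => [x y|x y|x y p]; apply: vconcat_vle; first [exact: vle_refl | exact: cedge_vle]. Qed.

Lemma fibprod_edge_neq (z : E1 T) : iota (d0 z) != iota (d1 z).
Proof.
apply/negP => /eqP /vconcat_inj; case: z => [x y|x y|x y p] /= E;
  have [/= E1 E2] := (congr1 fst E, congr1 snd E);
  first [move: (cedge_neq x); rewrite E1 eqxx | move: (cedge_neq y); rewrite E2 eqxx] => //.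
Qed.

(* Cubes of dimension <= 1 qualify too, since edges of T go up in [m + n]. *)
Lemma in_COSK_nontwisted_coords d (x : bcube T d) :
  in_COSK iota x -> nontwisted_coords (fun v => iota (m0 (bmap x) v)).
Proof.
move=> [Hb [Hd|/non_twistedP //]].
case: d x Hb Hd => [|[|//]] x [Hd0 [Hd1 _]] _; first exact: vert0_nontwisted_coords.
have z0 : (zero_vert 1) ord0 == false by rewrite ffunE.
pose e0 : cedge 1 := exist _ (zero_vert 1, ord0) z0.
have Et : unit_vert ord0 = etgt e0 by apply/ffunP => k; rewrite (ord1 k) !ffunE.
have Es : zero_vert 1 = esrc e0 by [].
apply: vert1_nontwisted_coords; rewrite Es Et -(Hd0 e0) -(Hd1 e0).
  exact: fibprod_edge_vle.
exact: fibprod_edge_neq.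
Qed.

Definition bface d (i : 'I_d.+1) (alpha : bool) (x : bcube T d.+1) : bcube T d :=
  @BCube _ T d (fun j : 'I_d => bw x (lift i j))
    (@LMap _ (cube1 (fun j : 'I_d => bw x (lift i j))) T
       (fun v => m0 (bmap x) (vface i alpha v)) (fun e => m1 (bmap x) (eface i alpha e))).

Lemma is_bcube_face d (i : 'I_d.+1) alpha (x : bcube T d.+1) :
  is_bcube x -> is_bcube (bface i alpha x).
Proof.
move=> [H0 [H1 H2]]; split; [|split] => e; first exact: H0 (eface i alpha e).
  have h : d1 (m1 (bmap x) (eface i alpha e)) = m0 (bmap x) (etgt (eface i alpha e)) := H1 _.
  by rewrite eface_tgt in h.
exact: H2 (eface i alpha e).
Qed.

Lemma bface_is_bface d (i : 'I_d.+1) alpha (x : bcube T d.+1) :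
  is_bface i alpha (bface i alpha x) x.
Proof.
split => //; split => // e e' Es Et.
by have -> : e' = eface i alpha e by apply: cedge_eq; rewrite ?eface_tgt.
Qed.

Lemma in_COSK_face d (i : 'I_d.+1) alpha (x : bcube T d.+1) :
  in_COSK iota x -> in_COSK iota (bface i alpha x).
Proof.
move=> Hx; have Hcoord := in_COSK_nontwisted_coords Hx.
split; first exact/is_bcube_face/(proj1 Hx).
case: (leqP d 1) => [|_]; first by left.
by right; apply/non_twistedP/(nontwisted_coords_face i alpha Hcoord).
Qed.

Lemma bcube_eq d (x x' : bcube T d) : is_bcube x -> is_bcube x' ->
  (forall v, m0 (bmap x) v = m0 (bmap x') v) -> x = x'.
Proof.
case: x => w [g0 g1]; case: x' => w' [g0' g1'] [H0 [H1 H2]] [H0' [H1' H2']] E /=.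
simpl in *.
have E0 : g0 = g0' by apply: functional_extensionality.
subst g0'.
have E1 : g1 = g1'.
  apply: functional_extensionality => e.
  by apply: fibprod_edge_eq; [exact: etrans (H0 e) (esym (H0' e)) | exact: etrans (H1 e) (esym (H1' e))].
subst g1'.
have Ew : w = w'.
  apply: functional_extensionality => j.
  have hz : (zero_vert d, j).1 (zero_vert d, j).2 == false by rewrite /= ffunE.
  by have := H2 (exist _ (zero_vert d, j) hz); rewrite H2'.
by subst w'.
Qed.

End FibCubes.

(** * Uniqueness of non-twisted factorizations *)

Lemma incr_ord_fun_eq d d' P (F : 'I_d -> 'I_P) (F' : 'I_d' -> 'I_P) :
  (forall j j' : 'I_d, j < j' -> F j < F j') ->
  (forall j j' : 'I_d', j < j' -> F' j < F' j') ->
  (forall r, (exists j, F j = r) <-> (exists j', F' j' = r)) ->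
  d = d' /\ forall (j : 'I_d) (j' : 'I_d'), j = j' :> nat -> F j = F' j'.
Proof.
move=> HF HF' Him.
have sorted_image q (G : 'I_q -> 'I_P) : (forall j j' : 'I_q, j < j' -> G j < G j') ->
    sorted ltn [seq val (G j) | j <- enum 'I_q].
  move=> HG; have : sorted ltn [seq val j | j <- enum 'I_q] by rewrite val_enum_ord iota_ltn_sorted.
  by rewrite !sorted_map; apply: sub_sorted => j j' /HG.
have Eseq : [seq val (F j) | j <- enum 'I_d] = [seq val (F' j) | j <- enum 'I_d'].
  apply: (irr_sorted_eq ltn_trans ltnn); try exact: sorted_image.
  move=> r; apply/mapP/mapP => -[j _ ->].
    by have [j' Ej'] := proj1 (Him (F j)) (ex_intro _ j erefl); exists j'; rewrite ?mem_enum ?Ej'.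
  by have [j' Ej'] := proj2 (Him (F' j)) (ex_intro _ j erefl); exists j'; rewrite ?mem_enum ?Ej'.
have dd : d = d' by have := congr1 size Eseq; rewrite !size_map -!enumT !size_enum_ord.
have nth_image q (G : 'I_q -> 'I_P) (j : 'I_q) : nth 0 [seq val (G j) | j <- enum 'I_q] j = G j.
  by rewrite (nth_map j) ?nth_ord_enum ?size_enum_ord.
split => // j j' Ej; apply: ord_inj.
by have := nth_image _ F j; rewrite Eseq Ej nth_image => <-.
Qed.

Definition nondegenerate p d (phi : vert p -> vert d) :=
  forall j, exists u, phi u j != phi (zero_vert p) j.

Definition fresh_coord p P (G : vert p -> vert P) (r : 'I_P) :=
  [exists u, G u r != G (zero_vert p) r] &&
  [forall r' : 'I_P, (r' < r) ==> [exists u, G u r' != G u r]].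

Lemma nonconst_coord_adj p d (phi : vert p -> vert d) j u :
  phi u j != phi (zero_vert p) j -> exists u1 u2, ham u1 u2 = 1 /\ phi u1 j != phi u2 j.
Proof.
move: {2}#|[pred k | u k]| (leqnn #|[pred k | u k]|) => N; elim: N u => [|N IH] u Hw Hu.
  suff Eu : u = zero_vert p by rewrite Eu eqxx in Hu.
  apply/ffunP => k; rewrite ffunE; apply/negP => uk.
  have : 0 < #|[pred k | u k]| by apply/card_gt0P; exists k.
  lia.
case: (boolP [exists k, u k]) => [/existsP [k uk]|/existsPn N0]; last first.
  suff Eu : u = zero_vert p by rewrite Eu eqxx in Hu.
  by apply/ffunP => k; rewrite ffunE; apply/negbTE; exact: N0.
pose u' : vert p := [ffun i => (i != k) && u i].
have Hham : ham u' u = 1.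
  apply/ham1P; exists k; rewrite ffunE eqxx uk; split => // i; rewrite ffunE.
  by case: (eqVneq i k) => //= _; rewrite eqxx.
case: (eqVneq (phi u' j) (phi u j)) => [E|N1]; last by exists u', u.
apply: (IH u'); last by rewrite E.
have Ec2 : #|[pred i | u' i]|.+1 = #|[pred k | u k]|.
  rewrite (cardD1 k [pred k | u k]) inE uk /= add1n; congr S.
  by apply: eq_card => i; rewrite !inE ffunE.
by move: Hw; rewrite -Ec2 ltnS.
Qed.

Lemma nondegenerate_coord_inj p d (phi : vert p -> vert d) : adj_pres phi -> nondegenerate phi ->
  forall j j', (forall u, phi u j = phi u j') -> j = j'.
Proof.
move=> [_ Hham] Hr j j' E.
have [u Hu] := Hr j; have [u1 [u2 [H12 N]]] := nonconst_coord_adj Hu.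
have /ham1P [k [_ Hk]] := Hham _ _ H12.
by rewrite (Hk j N) (Hk j') // -!E.
Qed.

(* [F j] is the first projection of [f] onto [j]. *)
Lemma fresh_coords_enum p d P (f : vert d -> vert P) (phi : vert p -> vert d) :
  nontwisted_coords f -> adj_pres phi -> nondegenerate phi ->
  exists F : 'I_d -> 'I_P, [/\ forall j j' : 'I_d, j < j' -> F j < F j',
    forall r, fresh_coord (fun u => f (phi u)) r <-> exists j, F j = r &
    forall j u, f (phi u) (F j) = phi u j].
Proof.
move=> Hf Ha Hr; have [Hcoord Hsurj _] := Hf.
have exF (j : 'I_d) : exists r, coord_proj f r j /\ forall r', coord_proj f r' j -> r <= r'.
  have [r0 Hr0] := Hsurj j.
  have ex : exists n, [exists r : 'I_P, (val r == n) && [forall e, f e r == e j]].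
    by exists (val r0); apply/existsP; exists r0; rewrite eqxx; apply/coord_projP.
  case: (ex_minnP ex) => n /existsP [r /andP [/eqP Er /coord_projP Hp]] min.
  exists r; split => // r' Hr'; rewrite Er; apply: min; apply/existsP; exists r'.
  by rewrite eqxx; apply/coord_projP.
have [F HF] := fin_all_exists exF.
have Fv j u : f (phi u) (F j) = phi u j by rewrite (proj1 (HF j)).
exists F; split => // [j j' lt|r].
  have [r [rlt Hr']] := nontwisted_coords_lt Hf lt (proj1 (HF j')).
  by have := proj2 (HF j) r Hr'; lia.
split.
  move=> /andP [/existsP [u Hu] /forallP Hm].
  case: (Hcoord r) => [[b Hb]|[j Hj]]; first by move: Hu; rewrite !Hb eqxx.
  exists j; have le := proj2 (HF j) r Hj.
  apply: val_inj; apply/eqP; rewrite eqn_leq le /= leqNgt; apply/negP => lt.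
  by have /existsP [v] := implyP (Hm (F j)) lt; rewrite Fv Hj eqxx.
move=> [j <-]; apply/andP; split.
  by have [u Hu] := Hr j; apply/existsP; exists u; rewrite !Fv.
apply/forallP => r'; apply/implyP => lt.
case: (boolP [exists u, f (phi u) r' != f (phi u) (F j)]) => // /existsPn N.
have E u : f (phi u) r' = phi u j by rewrite -Fv; apply/eqP; rewrite -[_ == _]negbK N.
case: (Hcoord r') => [[b Hb]|[j'' Hj'']].
  by have [u] := Hr j; rewrite -!E !Hb eqxx.
have Ej : j'' = j by apply: (nondegenerate_coord_inj Ha Hr) => u; rewrite -E Hj''.
by rewrite Ej in Hj''; have := proj2 (HF j) r' Hj''; lia.
Qed.

Section Factorization.
Variables (p P d d' : nat) (f : vert d -> vert P) (f' : vert d' -> vert P)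
  (phi : vert p -> vert d) (phi' : vert p -> vert d').
Hypotheses (Hf : nontwisted_coords f) (Hf' : nontwisted_coords f')
  (Ha : adj_pres phi) (Ha' : adj_pres phi')
  (Hr : nondegenerate phi) (Hr' : nondegenerate phi')
  (Hcomp : forall u, f (phi u) = f' (phi' u)).

Lemma factor_coords : exists (F : 'I_d -> 'I_P) (F' : 'I_d' -> 'I_P),
  [/\ d = d', forall (j : 'I_d) (j' : 'I_d'), j = j' :> nat -> F j = F' j',
      forall j u, f (phi u) (F j) = phi u j & forall j u, f' (phi' u) (F' j) = phi' u j].
Proof.
have [F [F1 F2 F3]] := fresh_coords_enum Hf Ha Hr.
have [F' [F1' F2' F3']] := fresh_coords_enum Hf' Ha' Hr'.
have EG : (fun u => f (phi u)) = (fun u => f' (phi' u)) by apply: functional_extensionality.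
rewrite EG in F2; exists F, F'.
have [dd EF] : d = d' /\ forall (j : 'I_d) (j' : 'I_d'), j = j' :> nat -> F j = F' j'.
  by apply: incr_ord_fun_eq => // r; rewrite -F2 F2'.
by split.
Qed.

Lemma factor_dim_eq : d = d'.
Proof. by have [F [F' []]] := factor_coords. Qed.

End Factorization.

Lemma factor_eq p P d (f f' : vert d -> vert P) (phi phi' : vert p -> vert d) :
  nontwisted_coords f -> nontwisted_coords f' -> adj_pres phi -> adj_pres phi' ->
  nondegenerate phi -> nondegenerate phi' -> (forall u, f (phi u) = f' (phi' u)) ->
  phi = phi' /\ f = f'.
Proof.
move=> Hf Hf' Ha Ha' Hr Hr' Hcomp.
have [F [F' [_ FF F3 F3']]] := factor_coords Hf Hf' Ha Ha' Hr Hr' Hcomp.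
have Ephi u : phi u = phi' u by apply/ffunP => j; rewrite -F3 -F3' Hcomp (FF j j).
split; first exact: functional_extensionality.
apply: functional_extensionality => e; apply/ffunP => r.
have [[C1 _ _] [C1' _ _]] := (Hf, Hf').
move: (C1 r) (C1' r) => [[b Hb]|[j Hj]] [[b' Hb']|[j' Hj']].
- by rewrite Hb Hb'; have := congr1 (fun w : vert P => w r) (Hcomp (zero_vert p)); rewrite Hb Hb'.
- by have [u] := Hr' j'; rewrite -!Hj' -!Hcomp !Hb eqxx.
- by have [u] := Hr j; rewrite -!Hj Hcomp (Hcomp (zero_vert p)) !Hb' eqxx.
rewrite Hj Hj'; congr (e _); apply: (nondegenerate_coord_inj Ha' Hr') => u.
by rewrite -Hj' -Hcomp Hj Ephi.
Qed.

(** * The canonical map *)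

Section CanonicalMap.
Variables (Sg : Type) (tau : Sg) (bar : Sg -> Sg) (m n : nat)
  (a1 : 'I_m -> Sg) (a2 : 'I_n -> Sg) (p : nat).
Local Notation T := (fibprod tau bar (cube1 a1) (cube1 a2)).
Local Notation iota := (@vconcat m n : V0 T -> vert (m + n)).

(* Each constant coordinate of [phi] is absorbed into a face of [x]. *)
Lemma lequiv_nondegenerate d (x : bcube T d) (phi : vert p -> vert d) :
  lvalid iota (LElt x phi) ->
  exists t : lelt T p, [/\ lvalid iota t, nondegenerate (lphi t), lequiv iota t (LElt x phi) &
     forall u, m0 (bmap (lx t)) (lphi t u) = m0 (bmap x) (phi u)].
Proof.
elim: d x phi => [|d IH] x phi Hv.
  by exists (LElt x phi); split => //; [case | apply: rst_refl].
case: (boolP [exists j, [forall u, phi u j == phi (zero_vert p) j]]); last first.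
  move=> /existsPn N; exists (LElt x phi); split => //; last exact: rst_refl.
  by move=> j; have /forallPn [u Hu] := N j; exists u.
move=> /existsP [i /forallP Hi].
pose alpha := phi (zero_vert p) i.
pose phi2 (u : vert p) : vert d := [ffun k => phi u (lift i k)].
have Ephi : phi = fun u => vface i alpha (phi2 u).
  apply: functional_extensionality => u; apply/ffunP => k.
  case: (unliftP i k) => [k' ->|->]; first by rewrite vface_lift ffunE.
  by rewrite vface_i; apply/eqP; exact: Hi.
case: Hv => Hc Ha.
have Hv2 : lvalid iota (LElt (bface i alpha x) phi2).
  by split; [exact: in_COSK_face | apply: (adj_pres_face (i := i) (alpha := alpha)); rewrite -Ephi].
have [t [Ht1 Ht2 Ht3 Ht4]] := IH _ _ Hv2.
exists t; split => //; last by move=> u; rewrite Ht4 /= Ephi.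
apply: rst_trans Ht3 _; apply: rst_step; split => //; split; first by split.
exists d, (bface i alpha x), x, phi2, phi, i, alpha; split => //; split => //.
by split; [rewrite Ephi | exact: bface_is_bface].
Qed.

Lemma lmaps_exists (t : lelt T p) : lvalid iota t ->
  exists c : hcube T p, is_hcube c /\ lmaps t c.
Proof.
case: t => d x phi [[[Hx0 [Hx1 Hx2]] _] Ha] /=.
have [E' HE] := fin_all_exists (fun e => adj_pres_cedge e Ha).
have HE2 e e' : esrc e' = phi (esrc e) -> etgt e' = phi (etgt e) -> E' e = e'.
  by move=> h1 h2; apply: cedge_eq; rewrite ?(proj1 (HE e)) ?(proj2 (HE e)).
pose hs e := bw x (edir (E' e)).
exists (@HCube _ T p hs (@LMap _ (cube1s hs) T (fun u => m0 (bmap x) (phi u))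
                                   (fun e => m1 (bmap x) (E' e)))).
split; last by split => // e e' h1 h2; rewrite /= /hs (HE2 e e' h1 h2).
split.
  by exists d, (bw x), phi; split => // e e' h1 h2; rewrite /= /hs (HE2 e e' h1 h2).
split; [|split] => e /=.
- exact: etrans (Hx0 (E' e)) (congr1 (m0 (bmap x)) (proj1 (HE e))).
- exact: etrans (Hx1 (E' e)) (congr1 (m0 (bmap x)) (proj2 (HE e))).
- exact: Hx2 (E' e).
Qed.

Lemma lmaps_lrel (t t' : lelt T p) (c : hcube T p) : lrel iota t t' -> lmaps t c -> lmaps t' c.
Proof.
move=> [[_ Ha] [_ [d [x [x' [phi [phi' [i [alpha [Et [Et' [Ephi [Hw [H0 H1]]]]]]]]]]]]]].
subst t t'; rewrite /= in Ha * => -[L0 L1]; split => /= [u|e e' h1 h2]; first by rewrite L0 Ephi H0.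
have [e'' [s'' t'']] := adj_pres_cedge e Ha.
have [L2 L3] := L1 e e'' s'' t''.
have -> : e' = eface i alpha e''.
  by apply: cedge_eq; [rewrite h1 Ephi -s'' | rewrite eface_tgt h2 Ephi -t''].
by split; [rewrite L2 (H1 e'' (eface i alpha e'')) ?eface_tgt | rewrite L3 Hw].
Qed.

Lemma lmaps_inj (t t' : lelt T p) (c : hcube T p) :
  lvalid iota t -> lvalid iota t' -> lmaps t c -> lmaps t' c -> lequiv iota t t'.
Proof.
case: t => d x phi; case: t' => d' x' phi' Hv Hv' [L0 _] [L0' _].
have [[e y psi] [[Hc Ha] Hr Hequiv Hy]] := lequiv_nondegenerate Hv.
have [[e' y' psi'] [[Hc' Ha'] Hr' Hequiv' Hy']] := lequiv_nondegenerate Hv'.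
simpl in *.
have Hcomp u : iota (m0 (bmap y) (psi u)) = iota (m0 (bmap y') (psi' u)).
  by rewrite Hy Hy' -L0 -L0'.
have Hf := in_COSK_nontwisted_coords Hc; have Hf' := in_COSK_nontwisted_coords Hc'.
have ee := factor_dim_eq Hf Hf' Ha Ha' Hr Hr' Hcomp; subst e'.
have [Epsi Ef] := factor_eq Hf Hf' Ha Ha' Hr Hr' Hcomp.
have Ey : y = y'.
  apply: bcube_eq; [exact: (proj1 Hc) | exact: (proj1 Hc') | move=> v].
  exact: vconcat_inj (congr1 (fun f => f v) Ef).
subst psi' y'.
exact: rst_trans (rst_sym _ _ _ _ Hequiv) Hequiv'.
Qed.

End CanonicalMap.

(** * Strictness *)

Section Vert2.
Implicit Types u v : vert 2.
Local Notation o1 := (ord_max : 'I_2).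

Lemma ord2P (k : 'I_2) : k = ord0 \/ k = o1.
Proof. by case: k => [[|[|//]] Hk]; [left | right]; apply: val_inj. Qed.

Lemma vert2_eq u v : u ord0 = v ord0 -> u o1 = v o1 -> u = v.
Proof. by move=> h0 h1; apply/ffunP => k; case: (ord2P k) => ->. Qed.

Lemma vlt2 u v :
  vlt u v = ((u ord0 ==> v ord0) && (u o1 ==> v o1)) && ((u ord0 != v ord0) || (u o1 != v o1)).
Proof.
congr andb.
  by apply/forallP/andP => [H|[h0 h1] k]; [split; apply: H | case: (ord2P k) => ->].
apply/idP/idP => [H|]; last by case/orP; apply: contra => /eqP ->.
apply/negPn/negP; rewrite negb_or !negbK => /andP [/eqP h0 /eqP h1].
by move: H; rewrite (vert2_eq h0 h1) eqxx.
Qed.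

Lemma ham2 u v : ham u v = 1 <-> (u ord0 != v ord0) (+) (u o1 != v o1).
Proof.
rewrite ham1P; split.
  move=> [j [Hj Hk]]; case: (ord2P j) Hj Hk => -> Hj Hk.
    by rewrite Hj /=; apply/negP => /Hk /(congr1 val).
  by rewrite Hj addbT; apply/negP => /Hk /(congr1 val).
case: (boolP (u ord0 != v ord0)) => h0; case: (boolP (u o1 != v o1)) => h1 //= _.
  by exists ord0; split => // k; case: (ord2P k) => -> //; rewrite (negbTE h1).
by exists o1; split => // k; case: (ord2P k) => -> //; rewrite (negbTE h0).
Qed.

(* Sorting the two bits: an adjacency-preserving map [2] -> [2] which is not in [square]. *)
Definition sort2 u : vert 2 := [ffun k => if k == ord0 then u ord0 || u o1 else u ord0 && u o1].

Lemma sort2E u k : sort2 u k = if k == ord0 then u ord0 || u o1 else u ord0 && u o1.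
Proof. exact: ffunE. Qed.

Lemma sort2_adj_pres : adj_pres sort2.
Proof.
split => u v; rewrite ?vlt2 ?ham2 !sort2E /=;
  by case: (u ord0); case: (u o1); case: (v ord0); case: (v o1).
Qed.

End Vert2.

Section Strict.
Variables (Sg : Type) (tau : Sg) (bar : Sg -> Sg) (a : Sg).
Hypothesis Ha : a <> tau.
Local Notation o1 := (ord_max : 'I_2).

(* The edge of the first cube synchronises with those of the second. *)
Definition strict_labels (k : 'I_(1 + 2)) : Sg := if val k == 0 then a else bar a.
Local Notation A1 := (fun i : 'I_1 => strict_labels (lshift 2 i)).
Local Notation A2 := (fun j : 'I_2 => strict_labels (rshift 1 j)).
Local Notation T := (fibprod tau bar (cube1 A1) (cube1 A2)).

Definition edge1 : cedge 1 := exist _ (zero_vert 1, ord0) (introT eqP (ffunE _ _)).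

Lemma edge1_sync (e : cedge 2) :
  lab (l := cube1 A1) edge1 <> tau /\ bar (lab (l := cube1 A1) edge1) = lab (l := cube1 A2) e.
Proof. by []. Qed.

(* The two edges leaving 0 are synchronised, the other two move only in the second cube. *)
Definition twisted_vert (u : vert 2) : V0 T := ([ffun _ => u ord0 || u o1], u).
Definition twisted_edge (e : cedge 2) : E1 T :=
  if esrc e == zero_vert 2 then FS (edge1_sync e) else @FR _ tau bar (cube1 A1) (cube1 A2) [ffun _ => true] e.
Definition twisted_labels (e : cedge 2) : Sg := flab (twisted_edge e).

Definition twisted_square : hcube T 2 :=
  @HCube _ T 2 twisted_labels (@LMap _ (cube1s twisted_labels) T twisted_vert twisted_edge).

Lemma or2_neq0 (u : vert 2) : (u ord0 || u o1) = (u != zero_vert 2).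
Proof.
apply/idP/idP => [|]; first by apply: contraTneq => ->; rewrite !ffunE.
apply: contraR; rewrite negb_or => /andP [/negPf h0 /negPf h1].
by apply/eqP/vert2_eq; rewrite !ffunE.
Qed.

Lemma twisted_square_hcube : is_hcube twisted_square.
Proof.
split.
  exists 2, (fun j : 'I_2 => if j == ord0 then tau else bar a), sort2; split; first exact: sort2_adj_pres.
  move=> e e' h1 h2; rewrite /= /twisted_labels /twisted_edge.
  have := esrc_dir e'; have := etgt_dir e'; rewrite h1 h2.
  case: ifP => [/eqP z | nz] /=; case: (ord2P (edir e')) => -> //=; rewrite !sort2E /=.
    by rewrite !etgt_src z !ffunE /= !orbF; case: (ord2P (edir e)) => ->.
  by move=> _; rewrite or2_neq0 nz.
split; [|split] => e; rewrite /= /twisted_edge /twisted_vert //.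
  case: ifP => [/eqP z | nz] /=; last by rewrite or2_neq0 nz.
  by congr (_, _); apply/ffunP => k; rewrite or2_neq0 z eqxx !ffunE.
have tgt_nz : etgt e != zero_vert 2 by apply/eqP => /ffunP /(_ (edir e)); rewrite etgt_dir ffunE.
rewrite or2_neq0 tgt_nz; case: ifP => //= _.
by congr (_, _); apply/ffunP => k; rewrite (ord1 k) !ffunE.
Qed.

(* Coordinates 0 and 1 of the vertex map would both project onto the coordinate
   of [phi] flipped along the edge from 0 to (1, 0). *)
Lemma twisted_square_notin :
  ~ exists t : lelt T 2, lvalid (@vconcat 1 2 : V0 T -> _) t /\ lmaps t twisted_square.
Proof.
move=> [[d x phi] [[Hc [_ Hham]] [L0 _]]] /=; simpl in *.
have [Hcoord _ _] := in_COSK_nontwisted_coords Hc.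
set f := fun v => vconcat (m0 (bmap x) v).
have F0 u : f (phi u) (lshift 2 ord0) = u ord0 || u o1 by rewrite /f -L0 vconcat_l /=; exact: ffunE.
have F1 u : f (phi u) (rshift 1 ord0) = u ord0 by rewrite /f -L0 vconcat_r.
have proj_of r (b : vert 2 -> bool) : (forall u, f (phi u) r = b u) -> b (zero_vert 2) != b (unit_vert ord0) ->
    exists j, coord_proj f r j.
  by move=> Hb Hne; case: (Hcoord r) => [[c Hc']|//]; move: Hne; rewrite -!Hb !Hc' eqxx.
have [j0 Hj0] : exists j, coord_proj f (lshift 2 ord0) j by apply: (proj_of _ (fun u => u ord0 || u o1) F0); rewrite !ffunE.
have [j1 Hj1] : exists j, coord_proj f (rshift 1 ord0) j by apply: (proj_of _ (fun u => u ord0) F1); rewrite !ffunE.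
have /Hham /ham1P [k [_ Hk]] : ham (zero_vert 2) (unit_vert ord0) = 1 by apply/ham2; rewrite !ffunE.
have d0 : phi (zero_vert 2) j0 != phi (unit_vert ord0) j0 by rewrite -!Hj0 !F0 !ffunE.
have d1 : phi (zero_vert 2) j1 != phi (unit_vert ord0) j1 by rewrite -!Hj1 !F1 !ffunE.
have Ej : j0 = j1 by rewrite (Hk _ d0) (Hk _ d1).
have := F0 (unit_vert o1); have := F1 (unit_vert o1); rewrite Hj0 Hj1 Ej => ->.
by rewrite !ffunE.
Qed.

End Strict.

Unset Implicit Arguments.

Theorem theorem8p5 (Sg : Type) (tau : Sg) (bar : Sg -> Sg)
    (Hbar : forall a, a <> tau -> bar a <> tau /\ bar (bar a) = a) :
  (forall (m n : nat) (a : 'I_(m + n) -> Sg) (p : nat),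
     let T := fibprod tau bar (cube1 (fun i => a (lshift n i)))
                            (cube1 (fun j => a (rshift m j))) in
     let Th := fibprod tau bar (hcube1 (fun i => a (lshift n i)))
                             (hcube1 (fun j => a (rshift m j))) in
     let iota : V0 T -> vert (m + n) := @vconcat m n in
     (forall t : lelt T p, lvalid iota t ->
        exists c : hcube Th p, is_hcube c /\ lmaps t c) /\
     (forall (t t' : lelt T p) (c : hcube Th p),
        lrel iota t t' -> lmaps t c -> lmaps t' c) /\
     (forall (t t' : lelt T p) (c : hcube Th p),
        lvalid iota t -> lvalid iota t' -> lmaps t c -> lmaps t' c ->
        lequiv iota t t')) /\
  ((exists a : Sg, a <> tau) ->
   exists (m n : nat) (a : 'I_(m + n) -> Sg) (p : nat),
     let T := fibprod tau bar (cube1 (fun i => a (lshift n i)))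
                            (cube1 (fun j => a (rshift m j))) in
     let Th := fibprod tau bar (hcube1 (fun i => a (lshift n i)))
                             (hcube1 (fun j => a (rshift m j))) in
     let iota : V0 T -> vert (m + n) := @vconcat m n in
     exists c : hcube Th p, is_hcube c /\
       ~ exists t : lelt T p, lvalid iota t /\ lmaps t c).
Proof.
split=> [m n a p T Th iota | [a Ha]].
  split; first exact: lmaps_exists.
  by split; [exact: lmaps_lrel | exact: lmaps_inj].
exists 1, 2, (strict_labels bar a), 2 => T Th iota.
exists (twisted_square bar Ha).
by split; [exact: twisted_square_hcube | exact: twisted_square_notin].
Qed.
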